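(* For $a,b\ge0$ let $p_\bullet(a,b)=(p_k(a,b))_{k\in\mathbb{Z}}:=\mathrm{Poi}_a*\widehat{\mathrm{Poi}}_b$, i.e. $p_k(a,b)=\mathbb{P}(X-Y=k)$ for independent $X\sim\mathrm{Poi}_a$, $Y\sim\mathrm{Poi}_b$. Then for all $k\in\mathbb{Z}$, \[ \sqrt{p_k(a,b)\,p_{-k}(a,b)}=e^{-(\sqrt a-\sqrt b)^2}\,p_k\big(\sqrt{ab},\sqrt{ab}\big). \]
   Context: $\mathrm{Poi}_\lambda$ is the Poisson distribution with parameter $\lambda$, with $\mathrm{Poi}_0$ the point mass at $0$; $\widehat{\mathrm{Poi}}_b$ is its image under $k\mapsto-k$. *)

From Stdlib Require Import Reals ZArith Lra Lia.
From Coquelicot Require Import Coquelicot.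
Open Scope R_scope.

(* Poisson pmf with parameter lam >= 0 at n : nat; for lam = 0 this is the
   point mass at 0 since 0^0 = 1 for Stdlib's pow. *)
Definition poi (lam : R) (n : nat) : R := exp (- lam) * lam ^ n / INR (fact n).

Definition poiZ (lam : R) (z : Z) : R :=
  if (z <? 0)%Z then 0 else poi lam (Z.to_nat z).

(* p_k(a,b) = P(X - Y = k), X ~ Poi_a, Y ~ Poi_b independent:
   sum over the value m of Y of P(X = k + m) P(Y = m). *)
Definition pk (a b : R) (k : Z) : R :=
  Series (fun m : nat => poiZ a (k + Z.of_nat m)%Z * poi b m).

(* Reindexing the series for p_k by the value of Y shows that p_n(a,b) and
   p_{-n}(a,b) (n >= 0) share the factor e^{-a-b} S_n(ab), with
   S_n(x) = sum_m x^m / ((n+m)! m!), and differ only by the factors a^n and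
   b^n.  Their product is therefore a perfect square involving only ab, and
   e^{-a-b} = e^{-(sqrt a - sqrt b)^2} e^{-2 sqrt(ab)} turns its square root
   into the diagonal value p_n(sqrt(ab), sqrt(ab)). *)
From Stdlib Require Import Reals ZArith Lra Lia.
From Coquelicot Require Import Coquelicot.
Open Scope R_scope.

Lemma Series_nonneg (u : nat -> R) : (forall n, 0 <= u n) -> 0 <= Series u.
Proof.
  intros Hu. unfold Series.
  assert (Hlim : Rbar_le (Lim_seq (fun _ => 0)) (Lim_seq (sum_n u))).
  { apply Lim_seq_le_loc. exists O. intros N _.
    rewrite sum_n_Reals. now apply cond_pos_sum. }
  rewrite Lim_seq_const in Hlim.
  destruct (Lim_seq (sum_n u)); simpl in *; lra.
Qed.

Lemma Z_of_nat_or_opp (k : Z) : exists n, k = Z.of_nat n \/ k = (- Z.of_nat n)%Z.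
Proof. exists (Z.abs_nat k). lia. Qed.

Lemma poi_nonneg (lam : R) (n : nat) : 0 <= lam -> 0 <= poi lam n.
Proof.
  intros Hlam. unfold poi, Rdiv.
  apply Rmult_le_pos; [apply Rmult_le_pos|].
  - apply Rlt_le, exp_pos.
  - now apply pow_le.
  - apply Rlt_le, Rinv_0_lt_compat, INR_fact_lt_0.
Qed.

Lemma poiZ_nonneg (lam : R) (z : Z) : 0 <= lam -> 0 <= poiZ lam z.
Proof.
  intros Hlam. unfold poiZ. destruct (z <? 0)%Z; [lra | now apply poi_nonneg].
Qed.

Lemma poiZ_of_nat (lam : R) (n : nat) : poiZ lam (Z.of_nat n) = poi lam n.
Proof.
  unfold poiZ. destruct (Z.ltb_spec (Z.of_nat n) 0); [lia|].
  now rewrite Nat2Z.id.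
Qed.

Lemma pk_nonneg (a b : R) (k : Z) : 0 <= a -> 0 <= b -> 0 <= pk a b k.
Proof.
  intros Ha Hb. apply Series_nonneg. intros m.
  apply Rmult_le_pos; [now apply poiZ_nonneg | now apply poi_nonneg].
Qed.

(* [bessel_series n x = I_n(2 sqrt x) / x^(n/2)], with [I_n] the modified
   Bessel function of the first kind. *)
Definition bessel_series (n : nat) (x : R) : R :=
  Series (fun m => x ^ m / (INR (fact (n + m)) * INR (fact m))).

Lemma poi_mul_poi (a b : R) (n m : nat) :
  poi a (n + m) * poi b m =
  exp (- (a + b)) * a ^ n * ((a * b) ^ m / (INR (fact (n + m)) * INR (fact m))).
Proof.
  unfold poi. rewrite pow_add, Rpow_mult_distr, Ropp_plus_distr, exp_plus.
  pose proof (INR_fact_neq_0 (n + m)). pose proof (INR_fact_neq_0 m).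
  field. auto.
Qed.

Lemma pk_of_nat (a b : R) (n : nat) :
  pk a b (Z.of_nat n) = exp (- (a + b)) * a ^ n * bessel_series n (a * b).
Proof.
  unfold pk, bessel_series. rewrite <- Series_scal_l. apply Series_ext. intros m.
  now rewrite <- Nat2Z.inj_add, poiZ_of_nat, poi_mul_poi.
Qed.

Lemma pk_opp_of_nat (a b : R) (n : nat) :
  pk a b (- Z.of_nat n) = exp (- (a + b)) * b ^ n * bessel_series n (a * b).
Proof.
  unfold pk, bessel_series. rewrite (Series_incr_n_aux _ n).
  2:{ intros i Hi. unfold poiZ.
      destruct (Z.ltb_spec (- Z.of_nat n + Z.of_nat i) 0); [ring | lia]. }
  rewrite <- Series_scal_l. apply Series_ext. intros m.
  replace (- Z.of_nat n + Z.of_nat (n + m))%Z with (Z.of_nat m) by lia.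
  rewrite poiZ_of_nat, Rmult_comm, poi_mul_poi.
  now rewrite (Rplus_comm b), (Rmult_comm b).
Qed.

Lemma pk_diag_opp (c : R) (n : nat) : pk c c (- Z.of_nat n) = pk c c (Z.of_nat n).
Proof. now rewrite pk_opp_of_nat, pk_of_nat. Qed.

Lemma sqrt_sub_sqr_add (a b : R) : 0 <= a -> 0 <= b ->
  (sqrt a - sqrt b) ^ 2 + (sqrt (a * b) + sqrt (a * b)) = a + b.
Proof.
  intros Ha Hb. rewrite sqrt_mult by assumption.
  pose proof (sqrt_sqrt a Ha). pose proof (sqrt_sqrt b Hb). nra.
Qed.

Lemma pk_mul_pk_opp_of_nat (a b : R) (n : nat) : 0 <= a -> 0 <= b ->
  pk a b (Z.of_nat n) * pk a b (- Z.of_nat n) =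
  (exp (- (sqrt a - sqrt b) ^ 2) *
   pk (sqrt (a * b)) (sqrt (a * b)) (Z.of_nat n)) ^ 2.
Proof.
  intros Ha Hb. set (c := sqrt (a * b)).
  assert (Hcc : c * c = a * b) by (apply sqrt_sqrt; nra).
  rewrite pk_of_nat, pk_opp_of_nat, pk_of_nat, Hcc.
  assert (Hexp : exp (- (sqrt a - sqrt b) ^ 2) * exp (- (c + c)) = exp (- (a + b))).
  { rewrite <- exp_plus, <- (sqrt_sub_sqr_add a b Ha Hb). fold c. f_equal. ring. }
  assert (Hpow : a ^ n * b ^ n = c ^ n * c ^ n).
  { now rewrite <- !Rpow_mult_distr, Hcc. }
  rewrite <- Hexp.
  transitivity ((exp (- (sqrt a - sqrt b) ^ 2) * exp (- (c + c))) ^ 2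
                * (a ^ n * b ^ n) * bessel_series n (a * b) ^ 2); [ring|].
  rewrite Hpow. ring.
Qed.

Lemma pk_mul_pk_opp (a b : R) (k : Z) : 0 <= a -> 0 <= b ->
  pk a b k * pk a b (- k) =
  (exp (- (sqrt a - sqrt b) ^ 2) * pk (sqrt (a * b)) (sqrt (a * b)) k) ^ 2.
Proof.
  intros Ha Hb. destruct (Z_of_nat_or_opp k) as [n [-> | ->]].
  - now apply pk_mul_pk_opp_of_nat.
  - rewrite Z.opp_involutive, Rmult_comm, pk_diag_opp.
    now apply pk_mul_pk_opp_of_nat.
Qed.

Theorem lemma1 (a b : R) (ha : 0 <= a) (hb : 0 <= b) (k : Z) :
  sqrt (pk a b k * pk a b (- k)%Z) =
  exp (- (sqrt a - sqrt b) ^ 2) * pk (sqrt (a * b)) (sqrt (a * b)) k.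
Proof.
  rewrite pk_mul_pk_opp by assumption.
  apply sqrt_pow2, Rmult_le_pos.
  - apply Rlt_le, exp_pos.
  - apply pk_nonneg; apply sqrt_pos.
Qed.
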